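(* Let $\rho:\mathbb{R}\to\mathbb{R}$ be differentiable, applied element-wise to vectors, and let $\vec{W}\in\mathbb{R}^{N\times N}$, $\vec{b}\in\mathbb{R}^N$, $\vec{U}\in\mathbb{R}^{N\times d}$. If the CHN with these data is well-behaved, then $\rho'(0)\neq 0$.
   Context: A CHN (continuous Hopfield network) with element-wise non-linearity $\rho$ and parameters $\vec{W},\vec{b},\vec{U}$ assigns to an input $\vec{x}\in\mathbb{R}^d$ its equilibrium state(s), the solutions $\vec{s}^*\in\mathbb{R}^N$ of $\vec{s}^*=\rho'(\vec{s}^* )\odot(\vec{W}\rho(\vec{s}^* )+\vec{b}+\vec{U}\rho(\vec{x}))$, where $\odot$ is the Hadamard product. The CHN is called well-behaved if for every input $\vec{x}$ this equation has exactly one solution $\vec{s}^*$ and this solution is not identically zero. *)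

From HB Require Import structures.
From mathcomp Require Import all_boot all_order all_algebra.
From mathcomp Require Import all_classical all_reals all_analysis.
Set Implicit Arguments. Unset Strict Implicit. Unset Printing Implicit Defensive.
Import Order.TTheory GRing.Theory Num.Theory.
Local Open Scope ring_scope.

Definition chn_equilibrium (R : realType) (N d : nat) (rho : R -> R)
  (W : 'M[R]_(N, N)) (b : 'cV[R]_N) (U : 'M[R]_(N, d))
  (x : 'cV[R]_d) (s : 'cV[R]_N) : Prop :=
  s = map2_mx (fun p q => p * q) (map_mx (derive1 rho) s)
        (W *m map_mx rho s + b + U *m map_mx rho x).

Definition well_behaved (R : realType) (N d : nat) (rho : R -> R)
  (W : 'M[R]_(N, N)) (b : 'cV[R]_N) (U : 'M[R]_(N, d)) : Prop :=
  forall x : 'cV[R]_d,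
    exists s : 'cV[R]_N,
      [/\ chn_equilibrium rho W b U x s,
          (forall s' : 'cV[R]_N, chn_equilibrium rho W b U x s' -> s' = s)
        & s != 0].

From HB Require Import structures.
From mathcomp Require Import all_boot all_order all_algebra.
From mathcomp Require Import all_classical all_reals all_analysis.
Import Order.TTheory GRing.Theory Num.Theory.
Local Open Scope ring_scope.

Lemma chn_equilibrium0 {R : realType} {N d : nat} {rho : R -> R}
    {W : 'M[R]_(N, N)} {b : 'cV[R]_N} {U : 'M[R]_(N, d)} (x : 'cV[R]_d) :
  derive1 rho 0 = 0 -> chn_equilibrium rho W b U x 0.
Proof. by move=> rho'0; apply/matrixP => i j; rewrite !mxE rho'0 mul0r. Qed.

Lemma well_behaved_equilibrium_neq0 {R : realType} {N d : nat} {rho : R -> R}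
    {W : 'M[R]_(N, N)} {b : 'cV[R]_N} {U : 'M[R]_(N, d)} (x : 'cV[R]_d) :
  well_behaved rho W b U -> ~ chn_equilibrium rho W b U x 0.
Proof.
move=> wb eq0; have [s [_ uniq_s s_neq0]] := wb x.
by move: s_neq0; rewrite -(uniq_s 0 eq0) eqxx.
Qed.

(* The differentiability hypothesis is unused: [derive1] is total, and only its value at 0 matters. *)
Theorem lemma1 (R : realType) (N d : nat) (rho : R -> R)
  (W : 'M[R]_(N, N)) (b : 'cV[R]_N) (U : 'M[R]_(N, d)) :
  (forall t : R, derivable rho t 1) ->
  well_behaved rho W b U ->
  derive1 rho 0 != 0.
Proof.
move=> _ wb; apply/eqP => rho'0.
apply: (well_behaved_equilibrium_neq0 0 wb).
exact: chn_equilibrium0.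
Qed.
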